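(* Let $n\ge 2$ and let $Q_n$ be the graph defined below. For all $i\neq j$ in $\{1,\dots,n\}$, the graph $\sigma^{ij}_{\bowtie}(Q_n)$ is not a trapezoid graph.
   Context: $Q_n$ has $5n$ nodes $v_1,\dots,v_{5n}$, the edges $\{v_t,v_{t+1}\}$ for $1\le t<5n$ (a path), and additionally the edges $\{v_{5i-3},v_{5i-1}\}$ for each $i\in\{1,\dots,n\}$. For $i\in\{1,\dots,n\}$, $H_i$ is the subgraph with vertices $v_{5i-2},v_{5i-1}$ and the edge between them, and $\sigma_i: V(H_1)\to V(H_i)$ is the isomorphism $\sigma_i(v_3)=v_{5i-2}$, $\sigma_i(v_4)=v_{5i-1}$; $\sigma^{ij}=\sigma_i\circ\sigma_j^{-1}$. Crossing: given a graph $G$ and two independent isomorphic subgraphs $H=(V_1,E_1)$, $H'=(V_2,E_2)$ (disjoint vertex sets, no edges of $G$ between them) with isomorphism $\sigma:V_1\to V_2$, the crossing $\sigma_{\bowtie}(G)$ is obtained from $G$ by replacing every pair of edges $\{u,v\}\in E_1$, $\{\sigma(u),\sigma(v)\}\in E_2$ by the pair $\{u,\sigma(v)\}$, $\{\sigma(u),v\}$. Concretely, $\sigma^{ij}_{\bowtie}(Q_n)$ is obtained from $Q_n$ by removing the edges $\{v_{5i-2},v_{5i-1}\}$ and $\{v_{5j-2},v_{5j-1}\}$ and adding the edges $\{v_{5i-2},v_{5j-1}\}$ and $\{v_{5j-2},v_{5i-1}\}$. A trapezoid graph is the intersection graph of a family of trapezoids each having one side on a fixed top horizontal line and one side on a fixed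 parallel bottom line. *)

(* Graphs are symmetric irreflexive boolean relations. *)
From HB Require Import structures.
From mathcomp Require Import all_boot all_order all_algebra.
From mathcomp Require Import reals.
Set Implicit Arguments. Unset Strict Implicit. Unset Printing Implicit Defensive.
Import Order.TTheory GRing.Theory Num.Theory.

(* Vertices of Q_n are 0-indexed: the paper's v_t is the natural number t-1,
   and the vertex type is 'I_(5*n). *)

Definition same_pair (x y u v : nat) : bool :=
  ((x == u) && (y == v)) || ((x == v) && (y == u)).

(* Edge relation of Q_n on nat (restricted to 'I_(5n) below):
   path edges {v_t, v_(t+1)} and the chords {v_(5i-3), v_(5i-1)},
   i.e. 0-indexed {5k+1, 5k+3}. *)
Definition Q_edge (x y : nat) : bool :=
  (x.+1 == y) || (y.+1 == x) ||
  ((x %% 5 == 1) && (y == x + 2)) || ((y %% 5 == 1) && (x == y + 2)).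

(* Crossing of two independent single-edge subgraphs H = ({a,b},{ab}) and
   H' = ({a',b'},{a'b'}) along sigma : a |-> a', b |-> b':
   remove {a,b}, {a',b'}; add {a,b'}, {a',b}. *)
Definition cross_rel (e : rel nat) (a b a' b' : nat) : rel nat :=
  fun x y =>
    if same_pair x y a b || same_pair x y a' b' then false
    else if same_pair x y a b' || same_pair x y a' b then true
    else e x y.

(* sigma^{ij}_bowtie(Q_n), with i, j given 0-indexed (paper's i = i0+1):
   H_i has vertices v_(5i-2), v_(5i-1), i.e. 0-indexed 5*i0+2, 5*i0+3. *)
Definition Q_cross_edge (i j : nat) : rel nat :=
  cross_rel Q_edge (5 * i + 2) (5 * i + 3) (5 * j + 2) (5 * j + 3).

Definition Q_cross (n : nat) (i j : 'I_n) : rel 'I_(5 * n) :=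
  fun x y => Q_cross_edge i j (val x) (val y).

(* A trapezoid between the bottom line y = 0 and the top line y = 1,
   with top side [a, b] (a <= b) and bottom side [c, d] (c <= d):
   the convex hull of these two segments. *)
Record trapezoid (R : realType) := Trapezoid {
  top_l : R; top_r : R; bot_l : R; bot_r : R }.

Definition trap_valid (R : realType) (t : trapezoid R) : Prop :=
  (top_l t <= top_r t)%R /\ (bot_l t <= bot_r t)%R.

Definition in_trap (R : realType) (t : trapezoid R) (p : R * R) : Prop :=
  let: (px, py) := p in
  [/\ (0 <= py)%R, (py <= 1)%R,
      ((1 - py) * bot_l t + py * top_l t <= px)%R &
      (px <= (1 - py) * bot_r t + py * top_r t)%R].

Definition traps_meet (R : realType) (t1 t2 : trapezoid R) : Prop :=
  exists p : R * R, in_trap t1 p /\ in_trap t2 p.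

Definition is_trapezoid_graph (R : realType) (T : finType) (e : rel T) : Prop :=
  exists f : T -> trapezoid R,
    (forall x, trap_valid (f x)) /\
    (forall x y, x != y -> (e x y <-> traps_meet (f x) (f y))).

(* Trapezoid graphs are cocomparability graphs: two disjoint trapezoids lie
   strictly one left of the other on both lines, and "left of" is transitive.
   In the crossed graph (i < j) the path v_(5i-1) v_(5i) v_(5i+1) v_(5i+2) is
   induced, the new edge joins v_(5i-1) to v_(5j-2), and the path
   v_(5j-2), ..., v_(5i+2) avoids the neighbourhood of v_(5i).  If v_(5i-1) is
   left of v_(5i+1), then v_(5j-2) is left of v_(5i), the whole path stays left
   of v_(5i), and v_(5i-1) < v_(5i+2) < v_(5i) contradicts the edge
   v_(5i-1) v_(5i). *)
From mathcomp Require Import all_boot all_order all_algebra.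
From mathcomp Require Import reals.
From mathcomp Require Import lra zify.
Import Order.TTheory GRing.Theory Num.Theory.

Set Implicit Arguments.
Unset Strict Implicit.
Unset Printing Implicit Defensive.

Definition complement_orientation (T : Type) (adj lt : T -> T -> Prop) : Prop :=
  [/\ forall x y z, lt x y -> lt y z -> lt x z,
      forall x y, lt x y -> ~ adj x y &
      forall x y, ~ adj x y -> lt x y \/ lt y x].

Section Trapezoids.
Local Open Scope ring_scope.
Variable R : realType.
Implicit Types t : trapezoid R.

Definition trap_left t1 t2 : Prop :=
  top_r t1 < top_l t2 /\ bot_r t1 < bot_l t2.

Lemma traps_meet_sym t1 t2 : traps_meet t1 t2 -> traps_meet t2 t1.
Proof. by case=> p [? ?]; exists p. Qed.

Lemma trap_left_disjoint t1 t2 : trap_left t1 t2 -> ~ traps_meet t1 t2.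
Proof.
case=> ? ? [[px py] [/= [? ? ? ?] [? ? ? ?]]].
case: (lerP (bot_l t2 - bot_r t1) (top_l t2 - top_r t1)) => ?; nra.
Qed.

Lemma trap_left_trans t1 t2 t3 :
  trap_valid t2 -> trap_left t1 t2 -> trap_left t2 t3 -> trap_left t1 t3.
Proof. by case=> ? ? [? ?] [? ?]; split; lra. Qed.

Lemma traps_meet_top t1 t2 : trap_valid t1 -> trap_valid t2 ->
  top_l t2 <= top_r t1 -> top_l t1 <= top_r t2 -> traps_meet t1 t2.
Proof.
case=> ? ? [? ?] ? ?.
have [?|?] := lerP (top_l t1) (top_l t2).
- by exists (top_l t2, 1); split; split; lra.
- by exists (top_l t1, 1); split; split; lra.
Qed.

Lemma traps_meet_bot t1 t2 : trap_valid t1 -> trap_valid t2 ->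
  bot_l t2 <= bot_r t1 -> bot_l t1 <= bot_r t2 -> traps_meet t1 t2.
Proof.
case=> ? ? [? ?] ? ?.
have [?|?] := lerP (bot_l t1) (bot_l t2).
- by exists (bot_l t2, 0); split; split; lra.
- by exists (bot_l t1, 0); split; split; lra.
Qed.

Lemma traps_meet_cross t1 t2 : trap_valid t1 -> trap_valid t2 ->
  top_r t1 < top_l t2 -> bot_r t2 < bot_l t1 -> traps_meet t1 t2.
Proof.
case=> ? ? [? ?] ? ?.
set a := bot_r t1 - bot_l t2; set b := top_l t2 - top_r t1.
have a_gt0 : 0 < a by rewrite /a; lra.
have b_gt0 : 0 < b by rewrite /b; lra.
(* the right side of t1 and the left side of t2 cross at height a / (a + b) *)
set y := a / (a + b).
have yE : y * (a + b) = a by rewrite /y divfK // gt_eqF // addr_gt0.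
have y_ge0 : 0 <= y by rewrite /y divr_ge0 // ltW // addr_gt0.
have y_le1 : y <= 1 by nra.
exists ((1 - y) * bot_r t1 + y * top_r t1, y).
by rewrite /a /b in yE; split; split => //; nra.
Qed.

Lemma traps_disjoint_left t1 t2 : trap_valid t1 -> trap_valid t2 ->
  ~ traps_meet t1 t2 -> trap_left t1 t2 \/ trap_left t2 t1.
Proof.
move=> v1 v2 disj.
have [top12|top12] := ltrP (top_r t1) (top_l t2).
- have [bot12|bot12] := ltrP (bot_r t1) (bot_l t2); first by left.
  have [bot21|bot21] := ltrP (bot_r t2) (bot_l t1).
    by case: disj; apply: traps_meet_cross.
  by case: disj; apply: traps_meet_bot.
have [top21|top21] := ltrP (top_r t2) (top_l t1); last first.
  by case: disj; apply: traps_meet_top.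
have [bot21|bot21] := ltrP (bot_r t2) (bot_l t1); first by right.
have [bot12|bot12] := ltrP (bot_r t1) (bot_l t2).
  by case: disj; apply/traps_meet_sym/traps_meet_cross.
by case: disj; apply: traps_meet_bot.
Qed.

Lemma trap_complement_orientation (T : Type) (F : T -> trapezoid R) :
  (forall x, trap_valid (F x)) ->
  complement_orientation (fun x y => traps_meet (F x) (F y))
                         (fun x y => trap_left (F x) (F y)).
Proof.
move=> valid; split=> [x y z|x y|x y]; first exact: trap_left_trans.
  exact: trap_left_disjoint.
exact: traps_disjoint_left.
Qed.

End Trapezoids.

Section Orientation.
Variables (T : Type) (adj lt : T -> T -> Prop).
Hypothesis adj_sym : forall x y, adj x y -> adj y x.

Lemma complement_orientation_flip :
  complement_orientation adj lt -> complement_orientation adj (fun x y => lt y x).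
Proof.
case=> tr sep cmp; split=> [x y z yx zy|x y /sep yx /adj_sym //|x y /cmp].
  exact: tr zy yx.
by rewrite or_comm.
Qed.

Lemma orientation_walk_left (g : nat -> T) v len :
  complement_orientation adj lt ->
  (forall k, (k < len)%N -> adj (g k) (g k.+1)) ->
  (forall k, (k <= len)%N -> ~ adj (g k) v) ->
  lt (g 0) v -> lt (g len) v.
Proof.
case=> tr sep cmp; elim: len => [//|len IH] step avoid g0v.
have gv := IH (fun k hk => step k (leqW hk)) (fun k hk => avoid k (leqW hk)) g0v.
have [//|vg] := cmp _ _ (avoid _ (leqnn _)).
by case: (sep _ _ (tr _ _ _ gv vg)); apply: step.
Qed.

Lemma orientation_obstruction_left v0 v1 v2 (g : nat -> T) len :
  complement_orientation adj lt ->
  adj v0 v1 -> adj v1 v2 -> adj v2 (g len) -> adj v0 (g 0) ->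
  ~ adj v0 (g len) -> ~ adj (g 0) v2 ->
  (forall k, (k < len)%N -> adj (g k) (g k.+1)) ->
  (forall k, (k <= len)%N -> ~ adj (g k) v1) ->
  lt v0 v2 -> False.
Proof.
move=> orient a01 a12 a2g a0g n0g ng2 step avoid l02.
have [tr sep cmp] := orient.
have l0g : lt v0 (g len).
  by have [//|lg0] := cmp _ _ n0g; case: (sep _ _ (tr _ _ _ lg0 l02)); apply: adj_sym.
have lg2 : lt (g 0) v2.
  by have [//|l2g] := cmp _ _ ng2; case: (sep _ _ (tr _ _ _ l02 l2g)).
have lg1 : lt (g 0) v1.
  by have [//|l1g] := cmp _ _ (avoid 0 isT); case: (sep _ _ (tr _ _ _ l1g lg2)).
have := orientation_walk_left orient step avoid lg1 => lgl1.
exact: (sep _ _ (tr _ _ _ l0g lgl1)).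
Qed.

End Orientation.

Lemma complement_orientation_obstruction (T : Type) (adj lt : T -> T -> Prop)
    v0 v1 v2 (g : nat -> T) len :
  (forall x y, adj x y -> adj y x) -> complement_orientation adj lt ->
  adj v0 v1 -> adj v1 v2 -> adj v2 (g len) -> adj v0 (g 0) ->
  ~ adj v0 v2 -> ~ adj v0 (g len) -> ~ adj (g 0) v2 ->
  (forall k, (k < len)%N -> adj (g k) (g k.+1)) ->
  (forall k, (k <= len)%N -> ~ adj (g k) v1) -> False.
Proof.
move=> adj_sym orient a01 a12 a2g a0g n02 n0g ng2 step avoid.
have [_ _ cmp] := orient.
have [l02|l20] := cmp _ _ n02.
  exact: (orientation_obstruction_left adj_sym orient a01 a12 a2g a0g n0g ng2).
exact: (orientation_obstruction_left adj_sym
          (complement_orientation_flip adj_sym orient) a01 a12 a2g a0g n0g ng2).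
Qed.

Lemma cross_relE (e : rel nat) a b a' b' x y :
  cross_rel e a b a' b' x y =
  ~~ (same_pair x y a b || same_pair x y a' b') &&
  (same_pair x y a b' || same_pair x y a' b || e x y).
Proof. by rewrite /cross_rel; case: ifP => _; [|case: ifP]. Qed.

Lemma Q_cross_edgeC i j x y : Q_cross_edge i j x y = Q_cross_edge j i x y.
Proof. by rewrite /Q_cross_edge !cross_relE /same_pair; lia. Qed.

Ltac Q_cross_lia := rewrite /Q_cross_edge cross_relE /same_pair /Q_edge; lia.

Lemma Q_cross_edge_no_orientation (n i j : nat) (adj lt : nat -> nat -> Prop) :
  (i < j)%N -> (j < n)%N ->
  (forall x y, adj x y -> adj y x) -> complement_orientation adj lt ->
  (forall t u, (t < 5 * n)%N -> (u < 5 * n)%N -> t != u ->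
     adj t u <-> Q_cross_edge i j t u) ->
  False.
Proof.
move=> lt_ij lt_jn adj_sym orient adjE.
have edge t u : (t < 5 * n)%N -> (u < 5 * n)%N -> t != u ->
    Q_cross_edge i j t u -> adj t u.
  by move=> ht hu tu /(adjE _ _ ht hu tu).
have non_edge t u : (t < 5 * n)%N -> (u < 5 * n)%N -> t != u ->
    Q_cross_edge i j t u = false -> ~ adj t u.
  by move=> ht hu tu Qtu /(adjE _ _ ht hu tu); rewrite Qtu.
have walk_edge t : (5 * i + 6 <= t <= 5 * j + 1)%N -> adj t.+1 t.
  by move=> ht; apply: edge; [lia.. | Q_cross_lia].
have walk_avoid t : (5 * i + 6 <= t <= 5 * j + 2)%N -> ~ adj t (5 * i + 4).
  by move=> ht; apply: non_edge; [lia.. | Q_cross_lia].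
(* the paper's v_(5i-1), v_(5i), v_(5i+1) and path v_(5j-2), ..., v_(5i+2) *)
apply: (complement_orientation_obstruction (v0 := 5 * i + 3) (v1 := 5 * i + 4)
  (v2 := 5 * i + 5) (g := fun k => 5 * j + 2 - k) (len := 5 * j - 5 * i - 4)
  adj_sym orient).
- by apply: edge; [lia.. | Q_cross_lia].
- by apply: edge; [lia.. | Q_cross_lia].
- by apply: edge; [lia.. | Q_cross_lia].
- by apply: edge; [lia.. | Q_cross_lia].
- by apply: non_edge; [lia.. | Q_cross_lia].
- by apply: non_edge; [lia.. | Q_cross_lia].
- by apply: non_edge; [lia.. | Q_cross_lia].
- move=> k hk; rewrite (_ : 5 * j + 2 - k = (5 * j + 2 - k.+1).+1); last by lia.
  by apply: walk_edge; lia.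
- by move=> k hk; apply: walk_avoid; lia.
Qed.

Theorem mainTheorem12 (R : realType) (n : nat) (hn : (2 <= n)%N)
  (i j : 'I_n) (hij : i != j) :
  ~ is_trapezoid_graph R (Q_cross i j).
Proof.
move=> [f [f_valid f_edge]].
wlog lt_ij : i j hij f_edge / (i < j)%N.
  move=> gen; case: (ltngtP i j) => [|lt_ji|eq_ij]; first exact: gen.
    apply: (gen j i) => //; first by rewrite eq_sym.
    by move=> x y xy; rewrite -f_edge // /Q_cross Q_cross_edgeC.
  by move: hij; rewrite (val_inj eq_ij) eqxx.
have n5_gt0 : (0 < 5 * n)%N by lia.
pose F t := f (insubd (Ordinal n5_gt0) t).
apply: (Q_cross_edge_no_orientation lt_ij (ltn_ord j)
  (fun t u => @traps_meet_sym R (F t) (F u))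
  (trap_complement_orientation (F := F) (fun t => f_valid _))).
move=> t u ht hu tu; rewrite /F.
set x := insubd _ t; set y := insubd _ u.
have [xt yu] : val x = t /\ val y = u by rewrite !val_insubd ht hu.
have xy : x != y by rewrite -(inj_eq val_inj) xt yu.
by rewrite -xt -yu; apply: iff_sym; apply: f_edge.
Qed.
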